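(* Let $m,\delta,\gamma>0$ and let $\Gamma(x,y,z,u):=\frac{\Psi(x,z,u,\delta,\gamma)}{\langle Kx,y\rangle-f^*(y)}$ be defined on $\{(x,y)\in\mathbb{R}^n\times\operatorname{dom}f^*:\langle Kx,y\rangle-f^*(y)>m/2\}\times\operatorname{dom}g^*\times\mathbb{R}^n$. Suppose that $f^*$ is calm at $\hat y\in\operatorname{dom}f^*$, that $\hat x\in\mathcal{S}$ satisfies $\langle K\hat x,\hat y\rangle-f^*(\hat y)>m/2$, that $g^*$ is differentiable at $\hat z\in\operatorname{int}(\operatorname{dom}g^* )$, and let $\hat u\in\mathbb{R}^n$. Put $\alpha_1:=\Psi(\hat x,\hat z,\hat u,\delta,\gamma)$, $\alpha_2:=\langle K\hat x,\hat y\rangle-f^*(\hat y)$, and suppose $\alpha_1>0$. Then there exist open sets $\mathcal{O}_1\subseteq\mathbb{R}^n$, $\mathcal{O}_2\subseteq\operatorname{dom}f^*$, $\mathcal{O}_3\subseteq\operatorname{dom}g^*$ with $\hat x\in\mathcal{O}_1$, $\hat y\in\mathcal{O}_2$, $\hat z\in\mathcal{O}_3$, such that $\langle Kx,y\rangle-f^*(y)>m/2$ for all $(x,y)\in\mathcal{O}_1\times\mathcal{O}_2$, and the Fréchet subdifferential $\hat\partial\Gamma(\hat x,\hat y,\hat z,\hat u)$ equals the set of all $(\xi_x,\xi_y,\xi_z,\xi_u)$ with $\xi_x\in\frac{\alpha_2\left(A^*\hat z+\nabla h(\hat x)+\partial\iota_{\mathcal{S}}(\hat x)+\delta(\hat x-\hat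 u)\right)-\alpha_1K^*\hat y}{(\langle K\hat x,\hat y\rangle-f^*(\hat y))^2}$, $\xi_y\in\frac{\alpha_1(\partial f^*(\hat y)-K\hat x)}{(\langle K\hat x,\hat y\rangle-f^*(\hat y))^2}$, $\xi_z=\frac{A\hat x-\nabla g^*(\hat z)-\gamma\hat z}{\langle K\hat x,\hat y\rangle-f^*(\hat y)}$, $\xi_u=\frac{\delta(\hat u-\hat x)}{\langle K\hat x,\hat y\rangle-f^*(\hat y)}$.
   Context: $\mathcal{S}\subseteq\mathbb{R}^n$ nonempty, convex, compact; $A:\mathbb{R}^n\to\mathbb{R}^s$, $K:\mathbb{R}^n\to\mathbb{R}^p$ linear with adjoints $A^*,K^*$; $g:\mathbb{R}^s\to\mathbb{R}\cup\{+\infty\}$ proper, convex, lsc; $h:\mathbb{R}^n\to\mathbb{R}$ differentiable on an open set containing $\mathcal{S}$ with Lipschitz gradient there; $f:\mathbb{R}^p\to\mathbb{R}\cup\{+\infty\}$ proper, convex, lsc with $K(\mathcal{S})\subseteq\operatorname{int}(\operatorname{dom}f)$ and $f(Kx)>0$ on $\mathcal{S}$; $\mathcal{S}\cap A^{-1}(\operatorname{dom}g)\ne\emptyset$ and $\inf_{x\in\mathcal{S}}\{g(Ax)+h(x)\}>0$. $f^*,g^*$ are Fenchel conjugates, $\iota_{\mathcal{S}}$ the indicator of $\mathcal{S}$, $\partial$ the convex subdifferential, $\Psi(x,z,u,\delta,\gamma):=\langle z,Ax\rangle-g^*(z)+h(x)+\iota_{\mathcal{S}}(x)+\frac{\delta}{2}\|x-u\|^2-\frac{\gamma}{2}\|z\|^2$.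 A function $\varphi$ is calm at $\hat y\in\operatorname{dom}\varphi$ if there are $\epsilon,\kappa>0$ with $|\varphi(y)-\varphi(\hat y)|\le\kappa\|y-\hat y\|$ for all $y$ with $\|y-\hat y\|<\epsilon$. The Fréchet subdifferential is $\hat\partial\varphi(\bar w)=\{v:\liminf_{w\to\bar w,w\ne\bar w}\frac{\varphi(w)-\varphi(\bar w)-\langle v,w-\bar w\rangle}{\|w-\bar w\|}\ge0\}$. *)

(* R^k is modelled as column vectors 'cV[R]_k,
   linear maps as matrices, extended-real valued functions take values in \bar R. *)
From mathcomp Require Import all_boot all_order all_algebra.
From mathcomp Require Import all_classical all_reals all_analysis.
Import Order.TTheory GRing.Theory Num.Theory.
Import numFieldNormedType.Exports.
Set Implicit Arguments. Unset Strict Implicit. Unset Printing Implicit Defensive.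
Local Open Scope ring_scope.
Local Open Scope classical_set_scope.

Section Defs.
Variable R : realType.
Notation vec k := 'cV[R]_k.

Definition dotv {k} (u v : vec k) : R := \sum_(i < k) u i 0 * v i 0.
Definition enorm {k} (u : vec k) : R := Num.sqrt (dotv u u).

Definition edom {k} (phi : vec k -> \bar R) : set (vec k) := [set x | (phi x < +oo)%E].

Definition eproper {k} (phi : vec k -> \bar R) : Prop :=
  (forall x, phi x != -oo%E) /\ exists x, phi x \is a fin_num.

Definition cvx_set {k} (S : set (vec k)) : Prop :=
  forall x y (t : R), S x -> S y -> 0 <= t <= 1 -> S (t *: x + (1 - t) *: y).

Definition convex_efun {k} (phi : vec k -> \bar R) : Prop :=
  forall x y (t : R), (phi x < +oo)%E -> (phi y < +oo)%E -> 0 <= t <= 1 ->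
    (phi (t *: x + (1 - t) *: y)%R <= t%:E * phi x + (1 - t)%:E * phi y)%E.

Definition elsc {k} (phi : vec k -> \bar R) : Prop :=
  forall x (a : R), (a%:E < phi x)%E ->
    exists2 eps : R, 0 < eps & forall y, enorm (y - x) < eps -> (a%:E < phi y)%E.

Definition fconj {k} (phi : vec k -> \bar R) (y : vec k) : \bar R :=
  ereal_sup [set ((dotv x y)%:E - phi x)%E | x in [set: vec k]].

Definition ind_fun {k} (S : set (vec k)) (x : vec k) : \bar R :=
  if `[< S x >] then 0%E else +oo%E.

Definition subdiff {k} (phi : vec k -> \bar R) (x : vec k) : set (vec k) :=
  [set v | phi x \is a fin_num /\
           forall y, (phi x + (dotv v (y - x))%:E <= phi y)%E].

Definition is_grad {k} (phi : vec k -> \bar R) (x v : vec k) : Prop :=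
  phi x \is a fin_num /\
  forall eps : R, 0 < eps -> exists2 eta : R, 0 < eta &
    forall y, enorm (y - x) < eta ->
      (`| phi y - phi x - (dotv v (y - x))%:E | <= (eps * enorm (y - x))%:E)%E.

Definition calm {k} (phi : vec k -> \bar R) (y0 : vec k) : Prop :=
  phi y0 \is a fin_num /\
  exists eps kappa : R, [/\ 0 < eps, 0 < kappa &
    forall y, enorm (y - y0) < eps ->
      (`| phi y - phi y0 | <= (kappa * enorm (y - y0))%:E)%E].

(* Frechet subdifferential of a function of four vector arguments, on the
   Euclidean product space R^a x R^b x R^c x R^d; the liminf >= 0 condition
   is unfolded as: for all eps > 0, eventually the quotient is >= -eps. *)
Definition frechet4 {a b c d}
    (G : vec a -> vec b -> vec c -> vec d -> \bar R)
    (x : vec a) (y : vec b) (z : vec c) (u : vec d)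
  : set (vec a * vec b * vec c * vec d) :=
  [set xi | G x y z u \is a fin_num /\
    forall eps : R, 0 < eps -> exists2 eta : R, 0 < eta &
      forall x' y' z' u',
        let dist := Num.sqrt (enorm (x' - x) ^+ 2 + enorm (y' - y) ^+ 2 +
                              enorm (z' - z) ^+ 2 + enorm (u' - u) ^+ 2) in
        dist < eta ->
        ((- (eps * dist))%:E <=
           G x' y' z' u' - G x y z u
           - (dotv xi.1.1.1 (x' - x) + dotv xi.1.1.2 (y' - y)
              + dotv xi.1.2 (z' - z) + dotv xi.2 (u' - u))%:E)%E].

Definition Psi {n s} (A : 'M[R]_(s, n)) (g : vec s -> \bar R) (h : vec n -> R)
    (S : set (vec n)) (delta gamma : R) (x : vec n) (z : vec s) (u : vec n) : \bar R :=
  ((dotv z (A *m x))%:E - fconj g z + (h x)%:E + ind_fun S x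
   + (delta / 2 * enorm (x - u) ^+ 2)%:E - (gamma / 2 * enorm z ^+ 2)%:E)%E.

Definition denom {n p} (K : 'M[R]_(p, n)) (f : vec p -> \bar R) (x : vec n) (y : vec p)
  : \bar R := ((dotv (K *m x) y)%:E - fconj f y)%E.

(* Gamma, extended by +oo outside its domain
   {(x,y) in R^n x dom f^* : <Kx,y> - f^*(y) > m/2} x dom g^* x R^n *)
Definition Gamma {n p s} (A : 'M[R]_(s, n)) (K : 'M[R]_(p, n))
    (f : vec p -> \bar R) (g : vec s -> \bar R) (h : vec n -> R) (S : set (vec n))
    (m delta gamma : R) (x : vec n) (y : vec p) (z : vec s) (u : vec n) : \bar R :=
  if `[< [/\ (fconj f y < +oo)%E, ((m / 2)%:E < denom K f x y)%E
           & (fconj g z < +oo)%E] >]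
  then (Psi A g h S delta gamma x z u * ((fine (denom K f x y))^-1)%:E)%E
  else +oo%E.

End Defs.

From mathcomp Require Import all_boot all_order all_algebra.
From mathcomp Require Import all_classical all_reals all_analysis.
From mathcomp Require Import ring lra.
Import Order.TTheory GRing.Theory Num.Theory.
Import numFieldNormedType.Exports.
Set Implicit Arguments. Unset Strict Implicit. Unset Printing Implicit Defensive.
Local Open Scope ring_scope.
Local Open Scope classical_set_scope.

(* Near wh = (xh, yh, zh, uh) and for x in S, Gamma is the quotient of the real
   functions Psir and denomr; for x outside S it is +oo.  Psir is differentiable at
   wh because h and g^* are, while denomr = <Kx, y> - f^*(y) is a bilinear term minus
   f^*, and calmness makes f^*(y) - f^*(yh) an O(|y - yh|).  The quotient rule with
   remainders gives, with c = alpha1 / alpha2^2 > 0 and xi0 the claimed formula at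
   nu = eta = 0,
     Gamma(w) = Gamma(wh) + <xi0, w - wh> + c (f^*(y) - f^*(yh)) + o(|w - wh|).
   So xi is a Frechet subgradient iff <xi - xi0, w - wh> <= c (f^*(y) - f^*(yh)) + o
   for x in S.  Normal vectors nu to S and subgradients eta of f^* satisfy this by
   their defining inequalities.  Conversely, testing it along segments issued from wh,
   on which S and f^* are convex, shows that alpha2 (xi - xi0)_x is normal to S at xh,
   that (xi - xi0)_y / c is a subgradient of f^* at yh, and that the z and u
   components of xi - xi0 vanish. *)

Section Euclid.
Variables (R : realType) (k : nat).
Implicit Types u v w : 'cV[R]_k.

Lemma dotvC u v : dotv u v = dotv v u.
Proof. by apply: eq_bigr => i _; rewrite mulrC. Qed.

Lemma dotvDl u v w : dotv (u + v) w = dotv u w + dotv v w.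
Proof. by rewrite /dotv -big_split; apply: eq_bigr => i _; rewrite !mxE mulrDl. Qed.

Lemma dotvDr u v w : dotv w (u + v) = dotv w u + dotv w v.
Proof. by rewrite dotvC dotvDl !(dotvC w). Qed.

Lemma dotvZl a u v : dotv (a *: u) v = a * dotv u v.
Proof. by rewrite /dotv mulr_sumr; apply: eq_bigr => i _; rewrite !mxE mulrA. Qed.

Lemma dotvZr a u v : dotv v (a *: u) = a * dotv v u.
Proof. by rewrite dotvC dotvZl dotvC. Qed.

Lemma dotvNl u v : dotv (- u) v = - dotv u v.
Proof. by rewrite -scaleN1r dotvZl mulN1r. Qed.

Lemma dotvNr u v : dotv v (- u) = - dotv v u.
Proof. by rewrite dotvC dotvNl dotvC. Qed.

Lemma dotvBl u v w : dotv (u - v) w = dotv u w - dotv v w.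
Proof. by rewrite dotvDl dotvNl. Qed.

Lemma dotvBr u v w : dotv w (u - v) = dotv w u - dotv w v.
Proof. by rewrite dotvDr dotvNr. Qed.

Lemma dotv0l u : dotv 0 u = 0.
Proof. by rewrite /dotv big1 // => i _; rewrite mxE mul0r. Qed.

Lemma dotv0r u : dotv u 0 = 0.
Proof. by rewrite dotvC dotv0l. Qed.

Lemma dotvv_ge0 u : 0 <= dotv u u.
Proof. by apply: sumr_ge0 => i _; rewrite -expr2 sqr_ge0. Qed.

Lemma enorm_ge0 u : 0 <= enorm u.
Proof. exact: sqrtr_ge0. Qed.

Lemma enorm_sqr u : enorm u ^+ 2 = dotv u u.
Proof. by rewrite sqr_sqrtr // dotvv_ge0. Qed.

Lemma enorm0 : enorm (0 : 'cV[R]_k) = 0.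
Proof. by rewrite /enorm dotv0l sqrtr0. Qed.

Lemma enormZ a u : enorm (a *: u) = `|a| * enorm u.
Proof.
by rewrite /enorm dotvZl dotvZr mulrA -expr2 sqrtrM ?sqr_ge0 // sqrtr_sqr.
Qed.

Lemma coord_le_enorm u i : `|u i 0| <= enorm u.
Proof.
rewrite -(sqrtr_sqr (u i 0)) /enorm ler_sqrt; last exact: dotvv_ge0.
rewrite /dotv (bigD1 i) //= -expr2 lerDl sumr_ge0 // => j _.
by rewrite -expr2 sqr_ge0.
Qed.

Lemma enorm_le_sum_coord u : enorm u <= \sum_i `|u i 0|.
Proof.
have S0 : 0 <= \sum_i `|u i 0| by apply: sumr_ge0.
rewrite -(ger0_norm S0) -(sqrtr_sqr (\sum_i `|u i 0|)) /enorm ler_sqrt ?sqr_ge0 //.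
rewrite /dotv expr2 mulr_suml; apply: ler_sum => i _.
rewrite mulr_sumr (bigD1 i) //= -normrM ler_wpDr ?real_ler_norm ?num_real //.
by apply: sumr_ge0 => j _; rewrite mulr_ge0.
Qed.

Lemma normr_dotv_le u v : `|dotv u v| <= k%:R * (enorm u * enorm v).
Proof.
apply: le_trans (ler_norm_sum _ _ _) _.
rewrite -[in X in X * _](card_ord k) -sumr_const mulr_suml; apply: ler_sum => i _.
by rewrite mul1r normrM ler_pM ?coord_le_enorm.
Qed.

Lemma dotvv_le0 u : dotv u u <= 0 -> u = 0.
Proof.
move=> u0; apply/matrixP => i j; rewrite (ord1 j) mxE; apply/eqP.
rewrite -normr_le0; apply: le_trans (coord_le_enorm u i) _.
by rewrite /enorm (eqP (_ : Num.sqrt _ == 0)) ?sqrtr_eq0.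
Qed.

End Euclid.

Lemma dotv_mulmx (R : realType) a b (M : 'M[R]_(a, b)) z x :
  dotv z (M *m x) = dotv (M^T *m z) x.
Proof.
rewrite /dotv; under eq_bigr do rewrite mxE big_distrr /=.
under [RHS]eq_bigr do rewrite mxE big_distrl /=.
rewrite exchange_big /=; apply: eq_bigr => i _; apply: eq_bigr => j _.
by rewrite mxE; ring.
Qed.

Lemma enorm_mulmx_le (R : realType) a b (M : 'M[R]_(a, b)) x :
  enorm (M *m x) <= (\sum_i \sum_j `|M i j|) * enorm x.
Proof.
apply: le_trans (enorm_le_sum_coord _) _; rewrite mulr_suml; apply: ler_sum => i _.
rewrite mxE mulr_suml; apply: le_trans (ler_norm_sum _ _ _) _; apply: ler_sum => j _.
by rewrite normrM ler_wpM2l ?coord_le_enorm.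
Qed.

Lemma ball_colP (R : realType) k (x y : 'cV[R]_k) e :
  ball x e y <-> 0 < e /\ forall i, `|x i 0 - y i 0| < e.
Proof.
rewrite /ball /= /mx_ball; split=> -[e0 H]; split=> // i.
  by have := H i 0; rewrite /ball /=.
by move=> j; rewrite /ball /= (ord1 j); exact: H.
Qed.

Lemma sqrtr_le_sqr (R : rcfType) (a b : R) : 0 <= b -> a <= b ^+ 2 -> Num.sqrt a <= b.
Proof.
move=> b0 ab; have [a0|a0] := lerP 0 a; last by rewrite ltr0_sqrtr.
by rewrite -(ger0_norm b0) -sqrtr_sqr ler_sqrt // sqr_ge0.
Qed.

Lemma addr_scale_sub (R : pzRingType) (V : lmodType R) (x y : V) (t : R) :
  x + t *: (y - x) = t *: y + (1 - t) *: x.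
Proof. by rewrite scalerBr scalerBl scale1r addrCA. Qed.

Lemma lee_abs_sube_fin (R : realType) (a b : \bar R) (c r : R) :
  b \is a fin_num -> (`|a - b - c%:E| <= r%:E)%E ->
  a \is a fin_num /\ `|fine a - fine b - c| <= r.
Proof.
case: b => // b _; case: a => [a||] /=.
- by rewrite lee_fin.
- by rewrite leNgt ltey.
- by rewrite leNgt ltey.
Qed.

Lemma ind_fun_in (R : realType) k (S : set 'cV[R]_k) x : S x -> ind_fun S x = 0%E.
Proof. by move=> Sx; rewrite /ind_fun asboolT. Qed.

Lemma ind_fun_out (R : realType) k (S : set 'cV[R]_k) x : ~ S x -> ind_fun S x = +oo%E.
Proof. by move=> Sx; rewrite /ind_fun asboolF. Qed.

(* [fine] maps +oo to 0; [fconjr] is only used where the conjugate is finite. *)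
Definition fconjr (R : realType) k (phi : 'cV[R]_k -> \bar R) y := fine (fconj phi y).

Section Conjugate.
Variables (R : realType) (k : nat) (phi : 'cV[R]_k -> \bar R).
Hypothesis phi_proper : eproper phi.

Lemma fconj_gtNy y : (-oo < fconj phi y)%E.
Proof.
have [_ [x0 phix0]] := phi_proper.
apply: lt_le_trans (ereal_sup_ubound _); last by exists x0.
by rewrite -(fineK phix0) -EFinB ltNyr.
Qed.

Lemma fconj_fin_num y : (fconj phi y < +oo)%E -> fconj phi y \is a fin_num.
Proof. by move=> ylt; rewrite fin_numElt fconj_gtNy ylt. Qed.

Lemma fconj_convex y1 y2 t :
  fconj phi y1 \is a fin_num -> fconj phi y2 \is a fin_num -> 0 <= t <= 1 ->
  (fconj phi (t *: y1 + (1 - t) *: y2) <=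
     (t * fconjr phi y1 + (1 - t) * fconjr phi y2)%:E)%E.
Proof.
move=> F1 F2 /andP[t0 t1]; apply: ge_ereal_sup => _ [x _ <-].
have [phi_Ny _] := phi_proper.
case phix: (phi x) => [r||]; last by have := phi_Ny x; rewrite phix.
- have B1 : ((dotv x y1)%:E - phi x <= fconj phi y1)%E.
    by apply: ereal_sup_ubound; exists x.
  have B2 : ((dotv x y2)%:E - phi x <= fconj phi y2)%E.
    by apply: ereal_sup_ubound; exists x.
  move: B1 B2; rewrite phix -(fineK F1) -(fineK F2) -!EFinB !lee_fin => B1 B2.
  rewrite /= dotvDr !dotvZr /fconjr.
  have t1' : 0 <= 1 - t by rewrite subr_ge0.
  have := ler_wpM2l t0 B1; have := ler_wpM2l t1' B2; lra.
- by rewrite /= addeNy leNye.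
Qed.

Lemma fconjr_segment_le y0 y t :
  fconj phi y0 \is a fin_num -> fconj phi y \is a fin_num -> 0 <= t <= 1 ->
  fconj phi (y0 + t *: (y - y0)) \is a fin_num ->
  fconjr phi (y0 + t *: (y - y0)) - fconjr phi y0 <= t * (fconjr phi y - fconjr phi y0).
Proof.
move=> F0 F1 t01 Ft; have := fconj_convex F1 F0 t01.
by rewrite -addr_scale_sub -(fineK Ft) lee_fin /fconjr; lra.
Qed.

End Conjugate.

Section Asymptotics.
Variables (R : realType) (W : Type) (dist : W -> R).
Hypothesis dist_ge0 : forall w, 0 <= dist w.

Definition nearby (P : W -> Prop) :=
  exists2 r : R, 0 < r & forall w, dist w < r -> P w.

Definition littleo (e : W -> R) :=
  forall eps : R, 0 < eps -> nearby (fun w => `|e w| <= eps * dist w).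

Definition bigO (e : W -> R) :=
  exists2 C : R, 0 <= C & nearby (fun w => `|e w| <= C * dist w).

Lemma nearbyT (P : W -> Prop) : (forall w, P w) -> nearby P.
Proof. by move=> HP; exists 1. Qed.

Lemma nearbyS (P Q : W -> Prop) : (forall w, P w -> Q w) -> nearby P -> nearby Q.
Proof. by move=> PQ [r r0 HP]; exists r => // w /HP /PQ. Qed.

Lemma nearbyI (P Q : W -> Prop) : nearby P -> nearby Q -> nearby (fun w => P w /\ Q w).
Proof.
move=> [r1 r10 H1] [r2 r20 H2]; exists (Num.min r1 r2); first by rewrite lt_min r10 r20.
by move=> w; rewrite lt_min => /andP[/H1 ? /H2 ?].
Qed.

Lemma littleo_eq_near (e e' : W -> R) :
  littleo e -> nearby (fun w => e w = e' w) -> littleo e'.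
Proof.
move=> oe ee' eps e0; apply: nearbyS (nearbyI (oe _ e0) ee') => w [].
by move=> ? <-.
Qed.

Lemma bigO_eq (e e' : W -> R) : bigO e -> (forall w, e w = e' w) -> bigO e'.
Proof. by move=> Oe /funext <-. Qed.

Lemma littleo_eq (e e' : W -> R) : littleo e -> (forall w, e w = e' w) -> littleo e'.
Proof. by move=> oe /funext <-. Qed.

Lemma littleoD (e1 e2 : W -> R) :
  littleo e1 -> littleo e2 -> littleo (fun w => e1 w + e2 w).
Proof.
move=> o1 o2 eps e0; have e20 : 0 < eps / 2 by rewrite divr_gt0.
apply: nearbyS (nearbyI (o1 _ e20) (o2 _ e20)) => w [h1 h2].
by apply: le_trans (ler_normD _ _) _; lra.
Qed.

Lemma littleoZ a (e : W -> R) : littleo e -> littleo (fun w => a * e w).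
Proof.
move=> oe eps e0; have a1 : 0 < `|a| + 1 by rewrite ltr_pwDr.
apply: nearbyS (oe _ (divr_gt0 e0 a1)) => w ew.
rewrite normrM; apply: le_trans (ler_wpM2l (normr_ge0 _) ew) _.
have : eps / (`|a| + 1) * (`|a| + 1) = eps by rewrite divfK ?gt_eqF.
have := dist_ge0 w; have := normr_ge0 a; have := divr_gt0 e0 a1; nra.
Qed.

Lemma littleoB (e1 e2 : W -> R) :
  littleo e1 -> littleo e2 -> littleo (fun w => e1 w - e2 w).
Proof.
move=> o1 o2; have := littleoD o1 (littleoZ (-1) o2).
by under eq_fun do rewrite mulN1r.
Qed.

Lemma littleo_sqr (e : W -> R) C :
  nearby (fun w => `|e w| <= C * dist w ^+ 2) -> littleo e.
Proof.
move=> [r r0 H] eps e0; have C1 : 0 < `|C| + 1 by rewrite ltr_pwDr.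
exists (Num.min r (eps / (`|C| + 1))); first by rewrite lt_min r0 divr_gt0.
move=> w; rewrite lt_min => /andP[/H ew w2]; apply: le_trans ew _.
have := dist_ge0 w; have : dist w * (`|C| + 1) < eps by rewrite -ltr_pdivlMr.
have : C <= `|C| by exact: ler_norm.
rewrite expr2 => ? ? ?; nra.
Qed.

Lemma littleo_bigO (e : W -> R) : littleo e -> bigO e.
Proof. by move=> /(_ 1 ltr01) ?; exists 1. Qed.

Lemma bigO_le (e : W -> R) C : (forall w, `|e w| <= C * dist w) -> bigO e.
Proof.
move=> eC; exists `|C| => //; apply: nearbyT => w; apply: le_trans (eC w) _.
by rewrite ler_wpM2r // ler_norm.
Qed.

Lemma bigOD (e1 e2 : W -> R) : bigO e1 -> bigO e2 -> bigO (fun w => e1 w + e2 w).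
Proof.
move=> [C1 C10 H1] [C2 C20 H2]; exists (C1 + C2); first by rewrite addr_ge0.
apply: nearbyS (nearbyI H1 H2) => w [h1 h2].
by apply: le_trans (ler_normD _ _) _; lra.
Qed.

Lemma bigOZ a (e : W -> R) : bigO e -> bigO (fun w => a * e w).
Proof.
move=> [C C0 H]; exists (`|a| * C); first by rewrite mulr_ge0.
by apply: nearbyS H => w ew; rewrite normrM -mulrA ler_wpM2l.
Qed.

Lemma bigOB (e1 e2 : W -> R) : bigO e1 -> bigO e2 -> bigO (fun w => e1 w - e2 w).
Proof. by move=> O1 O2; apply: bigO_eq (bigOD O1 (bigOZ (-1) O2)) _ => w; ring. Qed.

Lemma bigO_nearby_lt (e : W -> R) c : bigO e -> 0 < c -> nearby (fun w => `|e w| < c).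
Proof.
move=> [C C0 [r r0 H]] c0; have C1 : 0 < C + 1 by rewrite ltr_pwDr.
exists (Num.min r (c / (C + 1))); first by rewrite lt_min r0 divr_gt0.
move=> w; rewrite lt_min => /andP[/H ew w2]; apply: le_lt_trans ew _.
have := dist_ge0 w; have : dist w * (C + 1) < c by rewrite -ltr_pdivlMr.
nra.
Qed.

Lemma littleoM_bigO (e1 e2 b : W -> R) B :
  bigO e1 -> bigO e2 -> nearby (fun w => `|b w| <= B) ->
  littleo (fun w => e1 w * e2 w * b w).
Proof.
move=> [C1 C10 H1] [C2 C20 H2] Hb; apply: (@littleo_sqr _ (C1 * C2 * B)).
apply: nearbyS (nearbyI (nearbyI H1 H2) Hb) => w [[h1 h2] h3].
have d0 := dist_ge0 w; rewrite !normrM.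
have h12 : `|e1 w| * `|e2 w| <= C1 * dist w * (C2 * dist w) by rewrite ler_pM.
have : `|e1 w| * `|e2 w| * `|b w| <= C1 * dist w * (C2 * dist w) * B.
  by rewrite ler_pM // ?mulr_ge0.
by rewrite expr2; nra.
Qed.

(* Besides the rescaled remainders of P and D, the error of the quotient is
   [(a2 - D) ((P - a1) a2 - a1 (D - a2)) / (D a2^2)]: two O-terms and a bounded factor. *)
Lemma littleo_div (P D P1 D1 : W -> R) (a1 a2 c : R) : 0 < c -> 0 < a2 ->
  nearby (fun w => c <= D w) -> bigO P1 -> bigO D1 ->
  littleo (fun w => P w - a1 - P1 w) -> littleo (fun w => D w - a2 - D1 w) ->
  littleo (fun w => P w / D w - a1 / a2 - (P1 w / a2 - a1 * D1 w / a2 ^+ 2)).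
Proof.
move=> c0 a20 Dc OP1 OD1 oP oD.
have OP : bigO (fun w => P w - a1).
  by apply: bigO_eq (bigOD OP1 (littleo_bigO oP)) _ => w; ring.
have OD : bigO (fun w => a2 - D w).
  by apply: bigO_eq (bigOZ (-1) (bigOD OD1 (littleo_bigO oD))) _ => w; ring.
have OPD : bigO (fun w => (P w - a1) * a2 - a1 * (D w - a2)).
  by apply: bigO_eq (bigOD (bigOZ a2 OP) (bigOZ a1 OD)) _ => w; ring.
have Dinv : nearby (fun w => `|(D w * a2 ^+ 2)^-1| <= (c * a2 ^+ 2)^-1).
  apply: nearbyS Dc => w cD; have D0 : 0 < D w by apply: lt_le_trans cD.
  rewrite ger0_norm; last by rewrite invr_ge0 mulr_ge0 ?sqr_ge0 ?ltW.
  by rewrite lef_pV2 ?posrE ?mulr_gt0 ?exprn_gt0 // ler_wpM2r ?sqr_ge0.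
apply: littleo_eq_near
  (littleoD (littleoD (littleoZ a2^-1 oP) (littleoZ (- (a1 / a2 ^+ 2)) oD))
            (littleoM_bigO OD OPD Dinv)) _.
apply: nearbyS Dc => w cD; have D0 : D w != 0 by rewrite gt_eqF // (lt_le_trans c0).
by field; rewrite D0 gt_eqF.
Qed.

End Asymptotics.

Section Product4.
Variables (R : realType) (a b c d : nat).
Local Notation W4 := ('cV[R]_a * 'cV[R]_b * 'cV[R]_c * 'cV[R]_d)%type.
Implicit Types v xi : W4.

Definition norm4 v := Num.sqrt (enorm v.1.1.1 ^+ 2 + enorm v.1.1.2 ^+ 2
                                + enorm v.1.2 ^+ 2 + enorm v.2 ^+ 2).

Definition dot4 xi v :=
  dotv xi.1.1.1 v.1.1.1 + dotv xi.1.1.2 v.1.1.2 + dotv xi.1.2 v.1.2 + dotv xi.2 v.2.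

Lemma norm4_ge0 v : 0 <= norm4 v.
Proof. exact: sqrtr_ge0. Qed.

Lemma norm4_ge_enorm v : [/\ enorm v.1.1.1 <= norm4 v, enorm v.1.1.2 <= norm4 v,
                             enorm v.1.2 <= norm4 v & enorm v.2 <= norm4 v].
Proof.
have le_norm4 r : 0 <= r -> r ^+ 2 <= enorm v.1.1.1 ^+ 2 + enorm v.1.1.2 ^+ 2
    + enorm v.1.2 ^+ 2 + enorm v.2 ^+ 2 -> r <= norm4 v.
  by move=> r0 rle; rewrite -(ger0_norm r0) -sqrtr_sqr ler_sqrt // !addr_ge0 ?sqr_ge0.
have := sqr_ge0 (enorm v.1.1.1); have := sqr_ge0 (enorm v.1.1.2).
have := sqr_ge0 (enorm v.1.2); have := sqr_ge0 (enorm v.2).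
by split; apply: le_norm4; rewrite ?enorm_ge0 //; lra.
Qed.

Lemma norm4_le_sum v : norm4 v <= enorm v.1.1.1 + enorm v.1.1.2 + enorm v.1.2 + enorm v.2.
Proof.
apply: sqrtr_le_sqr; first by rewrite !addr_ge0 ?enorm_ge0.
have := enorm_ge0 v.1.1.1; have := enorm_ge0 v.1.1.2.
have := enorm_ge0 v.1.2; have := enorm_ge0 v.2.
by rewrite !expr2; nra.
Qed.

Lemma norm4Z t v : norm4 (t *: v) = `|t| * norm4 v.
Proof.
rewrite /norm4 /= !enormZ !exprMn -!mulrDr sqrtrM ?sqr_ge0 //.
by rewrite sqrtr_sqr normr_id.
Qed.

Lemma dot4Bl xi1 xi2 v : dot4 (xi1 - xi2) v = dot4 xi1 v - dot4 xi2 v.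
Proof. by rewrite /dot4 /= !dotvBl; ring. Qed.

Lemma dot4Zr t xi v : dot4 xi (t *: v) = t * dot4 xi v.
Proof. by rewrite /dot4 /= !dotvZr; ring. Qed.

Lemma dot4_le_norm4 xi : exists C : R, forall v, `|dot4 xi v| <= C * norm4 v.
Proof.
exists (a%:R * enorm xi.1.1.1 + b%:R * enorm xi.1.1.2
        + c%:R * enorm xi.1.2 + d%:R * enorm xi.2) => v.
have [v1 v2 v3 v4] := norm4_ge_enorm v.
have le_term k (u w : 'cV[R]_k) : enorm w <= norm4 v ->
    `|dotv u w| <= k%:R * enorm u * norm4 v.
  move=> wv; apply: le_trans (normr_dotv_le _ _) _.
  by rewrite mulrA ler_wpM2l // mulr_ge0 ?enorm_ge0.
have := le_term _ xi.1.1.1 _ v1; have := le_term _ xi.1.1.2 _ v2.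
have := le_term _ xi.1.2 _ v3; have := le_term _ xi.2 _ v4.
have := ler_normD (dotv xi.1.1.1 v.1.1.1 + dotv xi.1.1.2 v.1.1.2 + dotv xi.1.2 v.1.2)
  (dotv xi.2 v.2).
have := ler_normD (dotv xi.1.1.1 v.1.1.1 + dotv xi.1.1.2 v.1.1.2) (dotv xi.1.2 v.1.2).
have := ler_normD (dotv xi.1.1.1 v.1.1.1) (dotv xi.1.1.2 v.1.1.2).
by rewrite /dot4; lra.
Qed.

Lemma frechet4P (G : 'cV[R]_a -> 'cV[R]_b -> 'cV[R]_c -> 'cV[R]_d -> \bar R) x y z u xi :
  frechet4 G x y z u xi <->
  G x y z u \is a fin_num /\
  forall eps : R, 0 < eps -> nearby (fun v => norm4 (v - (x, y, z, u))) (fun v =>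
    ((- (eps * norm4 (v - (x, y, z, u))))%:E <= G v.1.1.1 v.1.1.2 v.1.2 v.2
       - G x y z u - (dot4 xi (v - (x, y, z, u)))%:E)%E).
Proof.
split=> -[Gw H]; split=> // eps /H [r r0 Hr]; exists r => //.
  by case=> [[[x' y'] z'] u']; exact: Hr.
by move=> x' y' z' u'; exact: (Hr (x', y', z', u')).
Qed.

End Product4.

Section VectorAsymptotics.
Variables (R : realType) (W : Type) (dist : W -> R).
Hypothesis dist_ge0 : forall w, 0 <= dist w.

Lemma is_grad_littleo k (phi : 'cV[R]_k -> \bar R) x v (pr : W -> 'cV[R]_k) :
  is_grad phi x v -> (forall w, enorm (pr w - x) <= dist w) ->
  nearby dist (fun w => phi (pr w) \is a fin_num) /\
  littleo dist (fun w => fine (phi (pr w)) - fine (phi x) - dotv v (pr w - x)).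
Proof.
move=> [phix Hphi] prx.
have near_grad eps : 0 < eps -> nearby dist (fun w => phi (pr w) \is a fin_num /\
    `|fine (phi (pr w)) - fine (phi x) - dotv v (pr w - x)| <= eps * dist w).
  move=> e0; have [r r0 Hr] := Hphi _ e0; exists r => // w wr.
  have [phiw le_eps] := lee_abs_sube_fin phix (Hr _ (le_lt_trans (prx w) wr)).
  by split=> //; apply: le_trans le_eps (ler_wpM2l (ltW e0) (prx w)).
split; first by apply: nearbyS (near_grad _ ltr01) => w [].
by move=> eps /near_grad; apply: nearbyS => w [].
Qed.

Lemma calm_bigO k (phi : 'cV[R]_k -> \bar R) y0 (pr : W -> 'cV[R]_k) :
  calm phi y0 -> (forall w, enorm (pr w - y0) <= dist w) ->
  nearby dist (fun w => phi (pr w) \is a fin_num) /\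
  bigO dist (fun w => fine (phi (pr w)) - fine (phi y0)).
Proof.
move=> [phiy0 [r [kap [r0 kap0 Hr]]]] pry0.
have near_calm : nearby dist (fun w => phi (pr w) \is a fin_num /\
    `|fine (phi (pr w)) - fine (phi y0)| <= kap * dist w).
  exists r => // w wr; have := Hr _ (le_lt_trans (pry0 w) wr).
  rewrite -[X in `|X|%E]sube0 => /(lee_abs_sube_fin phiy0).
  rewrite subr0 => -[phiw le_kap]; split=> //.
  exact: le_trans le_kap (ler_wpM2l (ltW kap0) (pry0 w)).
split; first by apply: nearbyS near_calm => w [].
by exists kap; [exact: ltW | apply: nearbyS near_calm => w []].
Qed.

Lemma littleo_dotv k (u v : W -> 'cV[R]_k) Cu Cv :
  (forall w, enorm (u w) <= Cu * dist w) -> (forall w, enorm (v w) <= Cv * dist w) ->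
  littleo dist (fun w => dotv (u w) (v w)).
Proof.
move=> uC vC; apply: (@littleo_sqr _ _ _ dist_ge0 _ (k%:R * (Cu * Cv))).
apply: nearbyT => w; apply: le_trans (normr_dotv_le _ _) _.
rewrite -mulrA ler_wpM2l // expr2 mulrACA.
by apply: ler_pM; rewrite ?enorm_ge0.
Qed.

End VectorAsymptotics.

Lemma enormB_le (R : realType) k (u v : 'cV[R]_k) :
  enorm (u - v) <= k%:R * (enorm u + enorm v).
Proof.
apply: le_trans (enorm_le_sum_coord _) _.
rewrite -[in X in X * _](card_ord k) -sumr_const mulr_suml; apply: ler_sum => i _.
rewrite mul1r !mxE; apply: le_trans (ler_normB _ _) _.
by apply: lerD; exact: coord_le_enorm.
Qed.

Section FrechetGamma.
Variables (R : realType) (n p s : nat).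
Variables (S : set 'cV[R]_n) (A : 'M[R]_(s, n)) (K : 'M[R]_(p, n)).
Variables (g : 'cV[R]_s -> \bar R) (h : 'cV[R]_n -> R) (gradh : 'cV[R]_n -> 'cV[R]_n).
Variables (f : 'cV[R]_p -> \bar R) (m delta gamma : R).
Hypotheses (HSconv : cvx_set S) (Hgprop : eproper g) (Hfprop : eproper f) (Hm : 0 < m).

Local Notation W := ('cV[R]_n * 'cV[R]_p * 'cV[R]_s * 'cV[R]_n)%type.
Local Notation F := (fconjr f).
Local Notation Gam := (Gamma A K f g h S m delta gamma).

Definition Psir (w : W) := dotv w.1.2 (A *m w.1.1.1) - fconjr g w.1.2 + h w.1.1.1
  + delta / 2 * enorm (w.1.1.1 - w.2) ^+ 2 - gamma / 2 * enorm w.1.2 ^+ 2.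

Definition denomr (w : W) := dotv (K *m w.1.1.1) w.1.1.2 - F w.1.1.2.

Lemma Psi_in (w : W) : S w.1.1.1 -> fconj g w.1.2 \is a fin_num ->
  Psi A g h S delta gamma w.1.1.1 w.1.2 w.2 = (Psir w)%:E.
Proof.
move=> Sx gz; rewrite /Psi ind_fun_in // -(fineK gz) adde0.
by rewrite /Psir /fconjr -EFinB.
Qed.

Lemma denom_fin (w : W) : fconj f w.1.1.2 \is a fin_num ->
  denom K f w.1.1.1 w.1.1.2 = (denomr w)%:E.
Proof. by move=> fy; rewrite /denom -(fineK fy) -EFinB. Qed.

Lemma Gamma_in (w : W) : fconj f w.1.1.2 \is a fin_num -> fconj g w.1.2 \is a fin_num ->
  m / 2 < denomr w -> S w.1.1.1 ->
  Gam w.1.1.1 w.1.1.2 w.1.2 w.2 = (Psir w / denomr w)%:E.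
Proof.
move=> fy gz Dw Sx; rewrite /Gamma asboolT; last first.
  by split; rewrite ?ltey_eq ?fy ?gz // denom_fin // lte_fin.
by rewrite Psi_in // denom_fin //= -EFinM.
Qed.

Lemma Gamma_out (w : W) : ~ S w.1.1.1 -> Gam w.1.1.1 w.1.1.2 w.1.2 w.2 = +oo%E.
Proof.
move=> Sx; rewrite /Gamma; case: asboolP => // -[fy Dw gz].
have gz' := fconj_fin_num Hgprop gz; have fy' := fconj_fin_num Hfprop fy.
rewrite /Psi ind_fun_out // -(fineK gz') -!EFinB -EFinD addey // -EFinN addye //.
move: Dw; rewrite denom_fin // lte_fin => Dw.
by rewrite gt0_mulye // lte_fin invr_gt0 (lt_trans _ Dw) ?divr_gt0.
Qed.

Variables (xh : 'cV[R]_n) (yh : 'cV[R]_p) (zh : 'cV[R]_s) (uh : 'cV[R]_n) (dg : 'cV[R]_s).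
Hypotheses (Hcalm : calm (fconj f) yh) (Hdg : is_grad (fconj g) zh dg).
Hypothesis Hgh : is_grad (fun x => (h x)%:E) xh (gradh xh).
Hypotheses (Hxh : S xh) (Hden : ((m / 2)%:E < denom K f xh yh)%E).
Hypothesis Halpha1 : (0 < Psi A g h S delta gamma xh zh uh)%E.

Local Notation wh := (xh, yh, zh, uh).
Local Notation dist := (fun w : W => norm4 (w - wh)).

Definition alpha1 := fine (Psi A g h S delta gamma xh zh uh).
Definition alpha2 := fine (denom K f xh yh).
Local Notation cy := (alpha1 / alpha2 ^+ 2).
Definition dF (w : W) := F w.1.1.2 - F yh.

Lemma dist_ge0 (w : W) : 0 <= dist w.
Proof. exact: norm4_ge0. Qed.

Lemma dist_x (w : W) : enorm (w.1.1.1 - xh) <= dist w.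
Proof. by case: (norm4_ge_enorm (w - wh)). Qed.

Lemma dist_y (w : W) : enorm (w.1.1.2 - yh) <= dist w.
Proof. by case: (norm4_ge_enorm (w - wh)). Qed.

Lemma dist_z (w : W) : enorm (w.1.2 - zh) <= dist w.
Proof. by case: (norm4_ge_enorm (w - wh)). Qed.

Lemma dist_u (w : W) : enorm (w.2 - uh) <= dist w.
Proof. by case: (norm4_ge_enorm (w - wh)). Qed.

Lemma fconj_yh_fin : fconj f yh \is a fin_num. Proof. by case: Hcalm. Qed.
Lemma fconj_zh_fin : fconj g zh \is a fin_num. Proof. by case: Hdg. Qed.

Lemma alpha1E : alpha1 = Psir wh.
Proof. by rewrite /alpha1 (@Psi_in wh) ?fconj_zh_fin. Qed.

Lemma alpha2E : alpha2 = denomr wh.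
Proof. by rewrite /alpha2 (@denom_fin wh) ?fconj_yh_fin. Qed.

Lemma alpha2_gt : m / 2 < alpha2.
Proof. by move: Hden; rewrite alpha2E (@denom_fin wh) ?fconj_yh_fin // lte_fin. Qed.

Lemma alpha2_gt0 : 0 < alpha2.
Proof. by apply: lt_trans alpha2_gt; rewrite divr_gt0. Qed.

Lemma alpha1_gt0 : 0 < alpha1.
Proof. by move: Halpha1; rewrite alpha1E (@Psi_in wh) ?fconj_zh_fin // lte_fin. Qed.

Lemma cy_gt0 : 0 < cy.
Proof. by rewrite divr_gt0 ?alpha1_gt0 ?exprn_gt0 ?alpha2_gt0. Qed.

Lemma Gamma_hat : Gam xh yh zh uh = (alpha1 / alpha2)%:E.
Proof.
by rewrite (@Gamma_in wh) ?fconj_yh_fin ?fconj_zh_fin -?alpha2E ?alpha2_gt // alpha1E.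
Qed.

Definition gradPsi : W := (A^T *m zh + gradh xh + delta *: (xh - uh), 0,
                           A *m xh - dg - gamma *: zh, delta *: (uh - xh)).

Definition graddenom : W := (K^T *m yh, K *m xh, 0, 0).

Lemma Psir_expansion : littleo dist (fun w => Psir w - alpha1 - dot4 gradPsi (w - wh)).
Proof.
have [_ oG] := is_grad_littleo (pr := fun w : W => w.1.2) Hdg dist_z.
have [_ oH] := is_grad_littleo (pr := fun w : W => w.1.1.1) Hgh dist_x.
have dA w : enorm (A *m (w.1.1.1 - xh)) <= (\sum_i \sum_j `|A i j|) * dist w.
  apply: le_trans (enorm_mulmx_le _ _) _.
  by rewrite ler_wpM2l ?dist_x //; do 2 apply: sumr_ge0 => ? _.
have dxu w : enorm (w.1.1.1 - xh - (w.2 - uh)) <= n%:R * 2 * dist w.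
  apply: le_trans (enormB_le _ _) _; rewrite -mulrA ler_wpM2l //.
  by have := dist_x w; have := dist_u w; lra.
have dz w : enorm (w.1.2 - zh) <= 1 * dist w by rewrite mul1r dist_z.
apply: littleo_eq (littleoB dist_ge0 (littleoD (littleoD
    (littleoB dist_ge0 (littleo_dotv dist_ge0 dz dA) oG) oH)
    (littleoZ dist_ge0 (delta / 2) (littleo_dotv dist_ge0 dxu dxu)))
  (littleoZ dist_ge0 (gamma / 2) (littleo_dotv dist_ge0 dz dz))) _.
case=> [[[x y] z] u]; rewrite alpha1E /Psir /dot4 /gradPsi /fconjr /= !enorm_sqr.
rewrite !(mulmxBr, dotvBl, dotvBr, dotvDl, dotvDr, dotvZl, dotvZr, dotvNr, dotv0l).
rewrite -!dotv_mulmx.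
rewrite !(dotvC xh x, dotvC u x, dotvC uh x, dotvC u xh, dotvC uh xh, dotvC uh u).
rewrite !(dotvC zh z, dotvC (A *m xh) z, dotvC (A *m xh) zh).
by field.
Qed.

Lemma denomr_expansion :
  littleo dist (fun w => denomr w - alpha2 - (dot4 graddenom (w - wh) - dF w)).
Proof.
have dK w : enorm (K *m (w.1.1.1 - xh)) <= (\sum_i \sum_j `|K i j|) * dist w.
  apply: le_trans (enorm_mulmx_le _ _) _.
  by rewrite ler_wpM2l ?dist_x //; do 2 apply: sumr_ge0 => ? _.
have dy w : enorm (w.1.1.2 - yh) <= 1 * dist w by rewrite mul1r dist_y.
apply: littleo_eq (littleo_dotv dist_ge0 dK dy) _.
case=> [[[x y] z] u]; rewrite alpha2E /denomr /dF /dot4 /graddenom /=.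
rewrite !(mulmxBr, dotvBl, dotvBr, dotv0l) -!dotv_mulmx.
by rewrite !(dotvC yh (K *m x), dotvC yh (K *m xh)); ring.
Qed.

Lemma dF_bigO : bigO dist dF.
Proof. exact: (calm_bigO (pr := fun w : W => w.1.1.2) Hcalm dist_y).2. Qed.

Lemma dot4_bigO (xi : W) : bigO dist (fun w => dot4 xi (w - wh)).
Proof. by have [C HC] := dot4_le_norm4 xi; apply: (bigO_le dist_ge0) => w; exact: HC. Qed.

Lemma nearby_domain : nearby dist (fun w =>
  [/\ fconj f w.1.1.2 \is a fin_num, fconj g w.1.2 \is a fin_num & m / 2 < denomr w]).
Proof.
have [fy _] := calm_bigO (pr := fun w : W => w.1.1.2) Hcalm dist_y.
have [gz _] := is_grad_littleo (pr := fun w : W => w.1.2) Hdg dist_z.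
have OD : bigO dist (fun w => denomr w - alpha2).
  apply: bigO_eq (bigOD (bigOB (dot4_bigO graddenom) dF_bigO)
                        (littleo_bigO denomr_expansion)) _ => w; ring.
have := bigO_nearby_lt dist_ge0 OD (_ : 0 < alpha2 - m / 2).
rewrite subr_gt0 => /(_ alpha2_gt) near_D.
apply: nearbyS (nearbyI (nearbyI fy gz) near_D) => w [[fyw gzw]].
by rewrite ltr_norml => /andP[Dw _]; split=> //; lra.
Qed.

Definition xi_x (nu : 'cV[R]_n) := (alpha2 ^+ 2)^-1 *:
  (alpha2 *: (A^T *m zh + gradh xh + nu + delta *: (xh - uh)) - alpha1 *: (K^T *m yh)).
Definition xi_y (eta : 'cV[R]_p) := (alpha2 ^+ 2)^-1 *: (alpha1 *: (eta - K *m xh)).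
Definition xi_z := alpha2^-1 *: (A *m xh - dg - gamma *: zh).
Definition xi_u := alpha2^-1 *: (delta *: (uh - xh)).
Definition xi0 : W := (xi_x 0, xi_y 0, xi_z, xi_u).

Lemma xi_xE nu : xi_x nu = xi_x 0 + alpha2^-1 *: nu.
Proof.
have a20 : alpha2 != 0 by rewrite gt_eqF ?alpha2_gt0.
by apply/matrixP => i j; rewrite /xi_x !mxE; field.
Qed.

Lemma xi_yE eta : xi_y eta = xi_y 0 + cy *: eta.
Proof.
have a20 : alpha2 != 0 by rewrite gt_eqF ?alpha2_gt0.
by apply/matrixP => i j; rewrite /xi_y !mxE; field.
Qed.

Lemma dot4_xi0 (v : W) :
  dot4 xi0 v = dot4 gradPsi v / alpha2 - alpha1 * dot4 graddenom v / alpha2 ^+ 2.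
Proof.
have a20 : alpha2 != 0 by rewrite gt_eqF ?alpha2_gt0.
rewrite /dot4 /xi0 /gradPsi /graddenom /xi_x /xi_y /xi_z /xi_u /=.
by rewrite !(dotvZl, dotvDl, dotvBl, dotvNl, dotv0l, addr0, add0r); field.
Qed.

Lemma dot4_subgrad nu eta (v : W) : dot4 (xi_x nu, xi_y eta, xi_z, xi_u) v =
  dot4 xi0 v + alpha2^-1 * dotv nu v.1.1.1 + cy * dotv eta v.1.1.2.
Proof. by rewrite /dot4 /= xi_xE xi_yE !dotvDl !dotvZl; ring. Qed.

Lemma Gamma_expansion : littleo dist (fun w =>
  Psir w / denomr w - alpha1 / alpha2 - dot4 xi0 (w - wh) - cy * dF w).
Proof.
have Dm : nearby dist (fun w => m / 2 <= denomr w).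
  by apply: nearbyS nearby_domain => w [_ _ /ltW].
have m20 : 0 < m / 2 by rewrite divr_gt0.
apply: littleo_eq (littleo_div dist_ge0 m20 alpha2_gt0 Dm (dot4_bigO gradPsi)
  (bigOB (dot4_bigO graddenom) dF_bigO) Psir_expansion denomr_expansion) _ => w.
by rewrite dot4_xi0; ring.
Qed.

Definition subgrad_formula : set W := [set xi | [/\
  exists2 nu, subdiff (ind_fun S) xh nu & xi.1.1.1 = xi_x nu,
  exists2 eta, subdiff (fconj f) yh eta & xi.1.1.2 = xi_y eta,
  xi.1.2 = xi_z & xi.2 = xi_u]].

Lemma subgrad_formula_frechet xi : subgrad_formula xi -> frechet4 Gam xh yh zh uh xi.
Proof.
case: xi => [[[ax ay] az] au] [[nu [_ Hnu] /= ->] [eta [_ Heta] /= ->] /= -> ->].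
apply/frechet4P; split; first by rewrite Gamma_hat.
move=> eps e0; apply: nearbyS (nearbyI nearby_domain (Gamma_expansion e0)).
move=> w [[fy gz Dw] Ew].
have [Sx|NSx] := pselect (S w.1.1.1); last first.
  by rewrite Gamma_out // Gamma_hat -EFinN !addye // leey.
rewrite Gamma_in // Gamma_hat -!EFinB lee_fin dot4_subgrad /=.
have Hx : alpha2^-1 * dotv nu (w.1.1.1 - xh) <= 0.
  rewrite pmulr_rle0 ?invr_gt0 ?alpha2_gt0 //.
  by have := Hnu w.1.1.1; rewrite !ind_fun_in // add0e lee_fin.
have Hy : 0 <= cy * (dF w - dotv eta (w.1.1.2 - yh)).
  rewrite mulr_ge0 ?(ltW cy_gt0) // subr_ge0 lerBrDl.
  by have := Heta w.1.1.2; rewrite -(fineK fy) -(fineK fconj_yh_fin) -EFinD lee_fin.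
by move: Ew; rewrite ler_norml => /andP[E1 _]; lra.
Qed.

Lemma frechet_excess xi : frechet4 Gam xh yh zh uh xi -> forall eps, 0 < eps ->
  nearby dist (fun w => S w.1.1.1 -> fconj f w.1.1.2 \is a fin_num /\
    dot4 (xi - xi0) (w - wh) <= cy * dF w + eps * dist w).
Proof.
move=> /frechet4P[_ Hfr] eps e0; have e20 : 0 < eps / 2 by rewrite divr_gt0.
apply: nearbyS (nearbyI (nearbyI (Hfr _ e20) nearby_domain) (Gamma_expansion e20)).
move=> w [[Fr [fy gz Dw]] Ew] Sx; split=> //.
move: Fr; rewrite Gamma_in // Gamma_hat -!EFinB lee_fin dot4Bl.
by move: Ew; rewrite ler_norml => /andP[_ E2] E3; lra.
Qed.

(* The excess inequality at wh + t v, divided by t, with t small against eps. *)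
Lemma frechet_dir xi (v : W) B : frechet4 Gam xh yh zh uh xi ->
  (forall t, 0 < t <= 1 -> S (xh + t *: v.1.1.1)) ->
  (forall t, 0 < t <= 1 -> fconj f (yh + t *: v.1.1.2) \is a fin_num ->
     cy * (F (yh + t *: v.1.1.2) - F yh) <= t * B) ->
  dot4 (xi - xi0) v <= B.
Proof.
move=> Hxi HS HF; apply/ler_addgt0Pr => eps e0.
set N := norm4 v; have N0 : 0 <= N := norm4_ge0 v.
have N1 : 0 < N + 1 by rewrite ltr_pwDr.
have [r r0 Hr] := frechet_excess Hxi (divr_gt0 e0 N1).
set q := r / (N + 1); set t := Num.min 1 q / 2.
have q0 : 0 < q by rewrite divr_gt0.
have m1 : Num.min 1 q <= 1 by rewrite ge_min lexx.
have mq : Num.min 1 q <= q by rewrite ge_min lexx orbT.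
have t0 : 0 < t by rewrite divr_gt0 // lt_min ltr01.
have t1 : t <= 1 by rewrite /t; lra.
have tr : t * N < r.
  have rq : r = q * (N + 1) by rewrite /q divfK ?gt_eqF.
  by rewrite rq /t; nra.
have vt : wh + t *: v - wh = t *: v by rewrite addrC addKr.
have dr : norm4 (wh + t *: v - wh) < r by rewrite vt norm4Z ger0_norm ?ltW.
have t01 : 0 < t <= 1 by rewrite t0 t1.
have [fyt] := Hr _ dr (HS t t01).
rewrite vt dot4Zr norm4Z (ger0_norm (ltW t0)) -/N /dF /= => excess.
have eN : eps / (N + 1) * N <= eps.
  by rewrite mulrAC ler_pdivrMr //; apply: ler_wpM2l; rewrite ?lerDl ?ltW.
have := ler_wpM2l (ltW t0) eN; have := HF t t01 fyt.
by move=> HFt teN; rewrite -(ler_pM2l t0); lra.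
Qed.

Lemma frechet_dir0 xi (v : W) : frechet4 Gam xh yh zh uh xi ->
  v.1.1.1 = 0 -> v.1.1.2 = 0 -> dot4 (xi - xi0) v <= 0.
Proof.
move=> Hxi v1 v2; apply: frechet_dir Hxi _ _ => t _; rewrite ?v1 ?v2 scaler0 addr0 //.
by rewrite subrr !mulr0.
Qed.

Lemma frechet_subgrad_formula xi : frechet4 Gam xh yh zh uh xi -> subgrad_formula xi.
Proof.
move=> Hxi; have a20 := alpha2_gt0; set d := xi - xi0.
split.
- exists (alpha2 *: d.1.1.1); last first.
    by rewrite xi_xE scalerA mulVf ?gt_eqF // scale1r /= addrC subrK.
  split=> [|y]; first by rewrite ind_fun_in.
  have [Sy|NSy] := pselect (S y); last by rewrite (ind_fun_out NSy) leey.
  rewrite !ind_fun_in // add0e lee_fin dotvZl pmulr_rle0 //.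
  have := frechet_dir (v := (y - xh, 0, 0, 0)) (B := 0) Hxi.
  rewrite /dot4 /= !dotv0r !addr0; apply=> [t /andP[t0 t1]|t _ _].
    by rewrite addr_scale_sub; apply: HSconv; rewrite // ltW.
  by rewrite scaler0 addr0 subrr !mulr0.
- exists (cy^-1 *: d.1.1.2); last first.
    by rewrite xi_yE scalerA mulfV ?gt_eqF ?cy_gt0 // scale1r /= addrC subrK.
  split=> [|y]; first exact: fconj_yh_fin.
  have [fy|nfy] := boolP (fconj f y \is a fin_num); last first.
    suff -> : fconj f y = +oo%E by rewrite leey.
    by apply/eqP; rewrite eq_le leey /= leNgt; apply: contra nfy; exact: fconj_fin_num.
  rewrite -(fineK fy) -(fineK fconj_yh_fin) -EFinD lee_fin dotvZl.
  rewrite -lerBrDl -/(F y) -/(F yh) ler_pdivrMl ?cy_gt0 //.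
  have := frechet_dir (v := (0, y - yh, 0, 0)) (B := cy * (F y - F yh)) Hxi.
  rewrite /dot4 /= !dotv0r add0r !addr0; apply=> [t _|t /andP[t0 t1] fyt].
    by rewrite scaler0 addr0.
  rewrite mulrCA ler_wpM2l ?(ltW cy_gt0) //.
  by apply: fconjr_segment_le; rewrite ?fconj_yh_fin ?(ltW t0).
- apply: subr0_eq; apply: dotvv_le0.
  by have := frechet_dir0 (v := (0, 0, d.1.2, 0)) Hxi erefl erefl; rewrite /dot4 /= !dotv0r !add0r addr0.
- apply: subr0_eq; apply: dotvv_le0.
  by have := frechet_dir0 (v := (0, 0, 0, d.2)) Hxi erefl erefl; rewrite /dot4 /= !dotv0r !add0r.
Qed.

Lemma frechet4_Gamma_eq : frechet4 Gam xh yh zh uh = subgrad_formula.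
Proof.
apply/seteqP; split=> xi.
  exact: frechet_subgrad_formula.
exact: subgrad_formula_frechet.
Qed.

Lemma denom_gt_near : exists2 r : R, 0 < r & forall x y, ball xh r x -> ball yh r y ->
  fconj f y \is a fin_num /\ ((m / 2)%:E < denom K f x y)%E.
Proof.
have [r0 r00 Hr] := nearby_domain.
set q := r0 / (n + p).+1%:R; have q0 : 0 < q by rewrite divr_gt0 ?ltr0n.
have coord_lt k (u u0 : 'cV[R]_k) : (forall i, `|u0 i 0 - u i 0| < q) ->
    enorm (u - u0) <= k%:R * q.
  move=> Hu; apply: le_trans (enorm_le_sum_coord _) _.
  under eq_bigr do rewrite !mxE distrC.
  apply: le_trans (ler_sum _ (fun i _ => ltW (Hu i))) _.
  by rewrite sumr_const card_ord mulr_natl.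
exists q => // x y /ball_colP[_ Hx] /ball_colP[_ Hy].
have dxy : norm4 ((x, y, zh, uh) - wh) < r0.
  apply: le_lt_trans (norm4_le_sum _) _; rewrite /= !subrr !enorm0 !addr0.
  apply: le_lt_trans (lerD (coord_lt _ _ _ Hx) (coord_lt _ _ _ Hy)) _.
  rewrite -mulrDl -natrD [X in _ < X](_ : r0 = (n + p).+1%:R * q).
    by rewrite ltr_pM2r // ltr_nat.
  by rewrite mulrC divfK // gt_eqF ?ltr0n.
have [fy _ Dxy] := Hr _ dxy.
by split=> //; rewrite (@denom_fin (x, y, zh, uh)) // lte_fin.
Qed.

End FrechetGamma.

Unset Implicit Arguments.
Set Strict Implicit.

Theorem lemma6p1 (R : realType) (n p s : nat)
  (S : set 'cV[R]_n) (A : 'M[R]_(s, n)) (K : 'M[R]_(p, n))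
  (g : 'cV[R]_s -> \bar R) (h : 'cV[R]_n -> R) (gradh : 'cV[R]_n -> 'cV[R]_n)
  (f : 'cV[R]_p -> \bar R)
  (* standing assumptions *)
  (HSne : exists x, S x) (HSconv : cvx_set S) (HScpt : compact S)
  (Hgprop : eproper g) (Hgconv : convex_efun g) (Hglsc : elsc g)
  (Hh : exists U : set 'cV[R]_n, [/\ open U, S `<=` U,
          (forall x, U x -> is_grad (fun w => (h w)%:E) x (gradh x)) &
          exists L : R, forall x y, U x -> U y ->
            enorm (gradh x - gradh y) <= L * enorm (x - y)])
  (Hfprop : eproper f) (Hfconv : convex_efun f) (Hflsc : elsc f)
  (HKS : forall x, S x -> (edom f)° (K *m x))
  (HfKpos : forall x, S x -> (0 < f (K *m x))%E)
  (HSAg : exists x, S x /\ (g (A *m x) < +oo)%E)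
  (Hinf : (0 < ereal_inf [set (g (A *m x) + (h x)%:E)%E | x in S])%E)
  (* hypotheses of the lemma *)
  (m delta gamma : R) (Hm : 0 < m) (Hdelta : 0 < delta) (Hgamma : 0 < gamma)
  (xh : 'cV[R]_n) (yh : 'cV[R]_p) (zh : 'cV[R]_s) (uh : 'cV[R]_n) (dg : 'cV[R]_s)
  (Hyh : edom (fconj f) yh) (Hcalm : calm (fconj f) yh)
  (Hxh : S xh) (Hden : ((m / 2)%:E < denom K f xh yh)%E)
  (Hzh : (edom (fconj g))° zh) (Hdg : is_grad (fconj g) zh dg)
  (Halpha1 : (0 < Psi A g h S delta gamma xh zh uh)%E) :
  let alpha1 := fine (Psi A g h S delta gamma xh zh uh) in
  let alpha2 := fine (denom K f xh yh) in
  exists (O1 : set 'cV[R]_n) (O2 : set 'cV[R]_p) (O3 : set 'cV[R]_s),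
    [/\ open O1 /\ O1 xh,
        [/\ open O2, O2 `<=` edom (fconj f) & O2 yh],
        [/\ open O3, O3 `<=` edom (fconj g) & O3 zh],
        (forall x y, O1 x -> O2 y -> ((m / 2)%:E < denom K f x y)%E) &
        frechet4 (Gamma A K f g h S m delta gamma) xh yh zh uh =
        [set xi | [/\
           exists2 nu, subdiff (ind_fun S) xh nu &
             xi.1.1.1 = (alpha2 ^+ 2)^-1 *:
               (alpha2 *: (A^T *m zh + gradh xh + nu + delta *: (xh - uh))
                - alpha1 *: (K^T *m yh)),
           exists2 eta, subdiff (fconj f) yh eta &
             xi.1.1.2 = (alpha2 ^+ 2)^-1 *: (alpha1 *: (eta - K *m xh)),
           xi.1.2 = alpha2^-1 *: (A *m xh - dg - gamma *: zh) &
           xi.2 = alpha2^-1 *: (delta *: (uh - xh))]]].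
Proof.
move=> al1 al2.
have [U [_ SU gradhU _]] := Hh.
have Hgh := gradhU xh (SU xh Hxh).
have [r r0 near_r] := denom_gt_near uh Hcalm Hdg Hden.
exists (ball xh r), (ball yh r), (edom (fconj g))°; split.
- by split; [exact: ball_open | exact: ballxx].
- split; [exact: ball_open | | exact: ballxx].
  by move=> y /(near_r xh y (ballxx _ r0)) [fy _]; rewrite /edom /= ltey_eq fy.
- by split; [exact: open_interior | exact: interior_subset | exact: Hzh].
- by move=> x y Bx By; case: (near_r x y Bx By).
- exact: frechet4_Gamma_eq.
Qed.
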